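(* Let $N\ge 1$, let $\mathbf{h}_s,\mathbf{h}_0\in\mathbb{C}^N$, let $\mathbf{R}\in\mathbb{C}^{N\times N}$ be Hermitian positive definite, and let $\bar P>0$, $P_t>0$, $\epsilon>0$. Consider the robust design problem $\mathbf{P1}$: $$\max_{\mathbf{S}\succeq 0}\ \log\big(1+\mathbf{h}_s^H\mathbf{S}\mathbf{h}_s\big)\quad\text{subject to}\quad \mathrm{tr}(\mathbf{S})\le \bar P,\ \ \mathbf{h}^H\mathbf{S}\mathbf{h}\le P_t\ \text{ for all } \mathbf{h}\in\mathbb{C}^N \text{ with } (\mathbf{h}-\mathbf{h}_0)^H\mathbf{R}^{-1}(\mathbf{h}-\mathbf{h}_0)\le\epsilon,$$ where the maximization is over Hermitian positive semidefinite $N\times N$ matrices $\mathbf{S}$. Then the optimal covariance matrix $\mathbf{S}$ of $\mathbf{P1}$ has rank one.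
   Context: $\mathbf{S}$ is the transmit covariance matrix of a secondary user with $N$ transmit antennas; $\mathbf{h}_s$ is the secondary link channel, and $\mathbf{h}$ is the (uncertain) channel to the primary user, known only to lie in the ellipsoid above with center $\mathbf{h}_0$ and shape matrix $\mathbf{R}$. *)

From HB Require Import structures.
From mathcomp Require Import all_boot all_order all_algebra.
From mathcomp Require Import reals exp.
From mathcomp Require Export complex.
Set Implicit Arguments. Unset Strict Implicit. Unset Printing Implicit Defensive.
Import Order.TTheory GRing.Theory Num.Theory.
Local Open Scope ring_scope.

Definition ctmx (R : rcfType) m n (A : 'M[R[i]]_(m, n)) : 'M[R[i]]_(n, m) :=
  (map_mx (@conjc R) A)^T.

Definition qform (R : rcfType) n (A : 'M[R[i]]_n) (v : 'cV[R[i]]_n) : R[i] :=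
  (ctmx v *m A *m v) ord0 ord0.

Definition hermitian (R : rcfType) n (A : 'M[R[i]]_n) : Prop := ctmx A = A.

Definition psd (R : rcfType) n (A : 'M[R[i]]_n) : Prop :=
  hermitian A /\ forall v : 'cV[R[i]]_n, 0 <= qform A v.

Definition pd (R : rcfType) n (A : 'M[R[i]]_n) : Prop :=
  hermitian A /\ forall v : 'cV[R[i]]_n, v != 0 -> 0 < qform A v.

(* Comparisons are in the (partial)
   order of the numClosedField R[i], i.e. the compared values are real. *)
Definition P1_feasible (R : realType) n (Rm : 'M[R[i]]_n) (h0 : 'cV[R[i]]_n)
    (Pbar Pt eps : R) (S : 'M[R[i]]_n) : Prop :=
  [/\ psd S, \tr S <= (Pbar%:C)%C
    & forall h : 'cV[R[i]]_n,
        qform (invmx Rm) (h - h0) <= (eps%:C)%C -> qform S h <= (Pt%:C)%C].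

(* objective of P1: log(1 + h_s^H S h_s) (natural log; h_s^H S h_s is real
   for Hermitian S, we take its real part) *)
Definition P1_obj (R : realType) n (hs : 'cV[R[i]]_n) (S : 'M[R[i]]_n) : R :=
  ln (1 + complex.Re (qform S hs)).

Definition P1_optimal (R : realType) n (Rm : 'M[R[i]]_n) (hs h0 : 'cV[R[i]]_n)
    (Pbar Pt eps : R) (S : 'M[R[i]]_n) : Prop :=
  P1_feasible Rm h0 Pbar Pt eps S /\
  forall S', P1_feasible Rm h0 Pbar Pt eps S' ->
    P1_obj hs S' <= P1_obj hs S.

From Pilot Require Import Defs.
From HB Require Import structures.
From mathcomp Require Import all_boot all_order all_algebra.
From mathcomp Require Import reals exp complex.
From mathcomp Require Import ring lra.
From mathcomp Require Import boolp classical_sets topology normedtype derive.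
Set Implicit Arguments. Unset Strict Implicit. Unset Printing Implicit Defensive.
Import Order.TTheory GRing.Theory Num.Theory numFieldNormedType.Exports.
Local Open Scope complex_scope.
Local Open Scope ring_scope.

(* If S is feasible and b := h_s^H S h_s > 0, the vector w := S h_s / sqrt b
   satisfies |h^H w|^2 = |h^H S h_s|^2 / b <= h^H S h for every h, by the
   Cauchy-Schwarz inequality for the semidefinite form of S.  Hence w w^H is
   feasible (its diagonal, thus its trace, is dominated by that of S) and has
   the same objective value as S.  The problem therefore reduces to maximizing
   |h_s^H w|^2 over the feasible vectors w, a closed and bounded subset of
   C^N = R^2N, where a maximizer u exists; u u^H is then optimal.  Should the
   maximum be 0, any nonzero feasible vector (a small multiple of e_1, the
   ellipsoid being bounded) is a maximizer as well. *)

Section ComplexScalars.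
Variable R : rcfType.
Local Notation C := R[i].

Definition sqnormc (z : C) : R := complex.Re z ^+ 2 + complex.Im z ^+ 2.

Lemma sqnormc_ge0 z : 0 <= sqnormc z.
Proof. by rewrite /sqnormc addr_ge0 // sqr_ge0. Qed.

Lemma mulcJ_sqnormc z : z * conjc z = (sqnormc z)%:C.
Proof.
by case: z => a b; rewrite /sqnormc /=; simpc; apply/eqP;
  rewrite eq_complex /=; apply/andP; split; apply/eqP; ring.
Qed.

Lemma sqnormcJ z : sqnormc (conjc z) = sqnormc z.
Proof. by case: z => a b; rewrite /sqnormc /= sqrrN. Qed.

Lemma sqnormcR (r : R) : sqnormc r%:C = r ^+ 2.
Proof. by rewrite /sqnormc /= expr0n /= addr0. Qed.

Lemma sqnormc0 : sqnormc 0 = 0.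
Proof. by rewrite -[0]/(0%:C) sqnormcR expr0n. Qed.

Lemma sqnormcRM (r : R) z : sqnormc (r%:C * z) = r ^+ 2 * sqnormc z.
Proof. by case: z => a b; rewrite /sqnormc /=; simpc; rewrite /=; ring. Qed.

Lemma sqnormcD_le z w : sqnormc (z + w) <= 2 * sqnormc z + 2 * sqnormc w.
Proof.
case: z w => a b [c d]; rewrite /sqnormc /=.
by have := sqr_ge0 (a - c); have := sqr_ge0 (b - d); nra.
Qed.

Lemma Re_sum m (F : 'I_m -> C) :
  complex.Re (\sum_j F j) = \sum_j complex.Re (F j).
Proof. by apply: big_morph => // -[a b] [c d]. Qed.

Lemma sum_complex m (F : 'I_m -> C) :
  \sum_j F j = (\sum_j complex.Re (F j)) +i* (\sum_j complex.Im (F j)).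
Proof. by elim/big_rec3: _ => // j a b c _ ->; case: (F j). Qed.

Lemma Re_ge0 (z : C) : 0 <= z -> 0 <= complex.Re z.
Proof. by rewrite lecE => /andP[]. Qed.

Lemma lec_Re (z : C) (r : R) : z <= r%:C -> complex.Re z <= r.
Proof. by rewrite lecE => /andP[]. Qed.

Lemma ge0_ReK (z : C) : 0 <= z -> (complex.Re z)%:C = z.
Proof. by move=> /ger0_Im; case: z => a b /= ->. Qed.

End ComplexScalars.

Section HermitianForms.
Variable R : rcfType.
Local Notation C := R[i].

Lemma ctmxK m p (A : 'M[C]_(m, p)) : ctmx (ctmx A) = A.
Proof. by apply/matrixP => i j; rewrite /ctmx !mxE conjcK. Qed.

Lemma ctmxM m p q (A : 'M[C]_(m, p)) (B : 'M[C]_(p, q)) :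
  ctmx (A *m B) = ctmx B *m ctmx A.
Proof. by rewrite /ctmx map_mxM trmx_mul. Qed.

Lemma ctmxD m p (A B : 'M[C]_(m, p)) : ctmx (A + B) = ctmx A + ctmx B.
Proof. by rewrite /ctmx map_mxD linearD. Qed.

Lemma ctmxZ m p (a : C) (A : 'M[C]_(m, p)) : ctmx (a *: A) = conjc a *: ctmx A.
Proof. by rewrite /ctmx map_mxZ linearZ. Qed.

Lemma ctmxE m p (A : 'M[C]_(m, p)) i j : ctmx A i j = conjc (A j i).
Proof. by rewrite /ctmx !mxE. Qed.

Lemma ctmx0 m p : ctmx (0 : 'M[C]_(m, p)) = 0.
Proof. by apply/matrixP => i j; rewrite ctmxE !mxE conjc0. Qed.

Lemma ctmx_delta n (j : 'I_n) : ctmx (delta_mx j 0 : 'cV[C]_n) = delta_mx 0 j.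
Proof. by apply/matrixP => a b; rewrite ctmxE !mxE rmorph_nat andbC. Qed.

Lemma mx11_mulmxA n (a : 'M[C]_(1, n)) (b : 'M[C]_(n, 1)) (c : 'M[C]_1) :
  (a *m b *m c) 0 0 = (a *m b) 0 0 * c 0 0.
Proof. by rewrite [in LHS]mxE big_ord1. Qed.

Definition dotc n (h v : 'cV[C]_n) : C := (ctmx h *m v) 0 0.

Definition sform n (S : 'M[C]_n) (x y : 'cV[C]_n) : C := (ctmx x *m S *m y) 0 0.

Definition dyad n (v : 'cV[C]_n) : 'M[C]_n := v *m ctmx v.

Lemma dotcC n (h v : 'cV[C]_n) : dotc v h = conjc (dotc h v).
Proof. by rewrite /dotc -ctmxE ctmxM ctmxK. Qed.

Lemma dotcZ n (h v : 'cV[C]_n) a : dotc h (a *: v) = a * dotc h v.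
Proof. by rewrite /dotc -scalemxAr mxE. Qed.

Lemma dotc0 n (h : 'cV[C]_n) : dotc h 0 = 0.
Proof. by rewrite /dotc mulmx0 mxE. Qed.

Lemma dotc_delta n (j : 'I_n) (v : 'cV[C]_n) : dotc (delta_mx j 0) v = v j 0.
Proof. by rewrite /dotc ctmx_delta -rowE mxE. Qed.

Lemma sformC n (S : 'M[C]_n) x y :
  Defs.hermitian S -> sform S y x = conjc (sform S x y).
Proof.
move=> hS; rewrite /sform -ctmxE !ctmxM ctmxK hS mulmxA.
by rewrite !mxE; apply: eq_bigr => k _; rewrite !mxE.
Qed.

Lemma sform_delta n (S : 'M[C]_n) (j : 'I_n) (v : 'cV[C]_n) :
  sform S (delta_mx j 0) v = (S *m v) j 0.
Proof. by rewrite /sform ctmx_delta -mulmxA -rowE mxE. Qed.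

Lemma qform_delta n (S : 'M[C]_n) (j : 'I_n) : qform S (delta_mx j 0) = S j j.
Proof. by rewrite -[LHS]/(sform _ _ _) sform_delta -colE mxE. Qed.

Lemma qform0 n (S : 'M[C]_n) : qform S 0 = 0.
Proof. by rewrite /qform ctmx0 !mul0mx mxE. Qed.

Lemma qformDZ n (S : 'M[C]_n) x y t :
  qform S (x + t *: y) =
  qform S x + t * sform S x y + conjc t * sform S y x + t * conjc t * qform S y.
Proof.
rewrite /qform /sform ctmxD ctmxZ !mulmxDl !mulmxDr -!scalemxAr -!scalemxAl.
by rewrite !mxE; ring.
Qed.

Lemma qform_dyad n (v h : 'cV[C]_n) :
  qform (dyad v) h = (sqnormc (dotc h v))%:C.
Proof.
rewrite /qform /dyad !mulmxA -(mulmxA (ctmx h *m v)) mx11_mulmxA.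
by rewrite -[ctmx v *m h]ctmxK ctmxM ctmxK ctmxE -mulcJ_sqnormc.
Qed.

Lemma tr_dyad n (v : 'cV[C]_n) : \tr (dyad v) = (\sum_j sqnormc (v j 0))%:C.
Proof.
rewrite /mxtrace rmorph_sum; apply: eq_bigr => j _.
by rewrite /dyad mxE big_ord1 ctmxE mulcJ_sqnormc.
Qed.

Lemma psd_dyad n (v : 'cV[C]_n) : psd (dyad v).
Proof.
split; first by rewrite /Defs.hermitian /dyad ctmxM ctmxK.
by move=> w; rewrite qform_dyad ler0c sqnormc_ge0.
Qed.

Lemma rank_dyad n (v : 'cV[C]_n) : v != 0 -> \rank (dyad v) = 1%N.
Proof.
move=> v0; apply/eqP; rewrite eqn_leq mulmx_max_rank /= lt0n mxrank_eq0.
apply: contra v0 => /eqP/matrixP v0; apply/eqP/matrixP => j k.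
have := v0 j j; rewrite (ord1 k) /dyad !mxE big_ord1 ctmxE => /eqP.
by rewrite mulf_eq0 conjc_eq0 orbb => /eqP.
Qed.

End HermitianForms.

Lemma quad_ge0_discr (R : realFieldType) (A B K : R) :
  0 <= A -> 0 <= B -> 0 <= K ->
  (forall s, 0 <= A - 2 * s * K + s ^+ 2 * K * B) -> K <= A * B.
Proof.
move=> A0 B0 K0 quad_ge0.
have [->|Kn0] := eqVneq K 0; first by rewrite mulr_ge0.
have Kp : 0 < K by rewrite lt_def Kn0.
have [B_eq0|Bn0] := eqVneq B 0.
  have := quad_ge0 ((A + 1) / (2 * K)); rewrite B_eq0 mulr0 addr0.
  have -> : 2 * ((A + 1) / (2 * K)) * K = A + 1 by field; rewrite gt_eqF.
  lra.
have Bp : 0 < B by rewrite lt_def Bn0.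
have := quad_ge0 B^-1.
have -> : A - 2 * B^-1 * K + B^-1 ^+ 2 * K * B = (A * B - K) / B by field.
by rewrite pmulr_lge0 ?invr_gt0 // subr_ge0.
Qed.

Section PositiveForms.
Variable R : rcfType.
Local Notation C := R[i].

Lemma psd_CauchySchwarz n (S : 'M[C]_n) x y : psd S ->
  sqnormc (sform S x y) <= complex.Re (qform S x) * complex.Re (qform S y).
Proof.
case=> hS pS; set c := sform S x y.
have := ge0_ReK (pS x); have := ge0_ReK (pS y).
move: (Re_ge0 (pS x)) (Re_ge0 (pS y)).
move: (complex.Re (qform S x)) (complex.Re (qform S y)) => a b a0 b0 eb ea.
apply: quad_ge0_discr => // [|s]; first exact: sqnormc_ge0.
(* the form of S is nonnegative at x - s conj(c) y *)
have := pS (x + (- (s%:C * conjc c)) *: y).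
rewrite qformDZ (sformC x y hS) -/c -ea -eb rmorphN rmorphM /= conjcK.
rewrite oppr0 -complexr0.
have -> : a%:C + - (s%:C * conjc c) * c + - (s%:C * c) * conjc c +
    - (s%:C * conjc c) * - (s%:C * c) * b%:C
   = (a - 2 * s * sqnormc c + s ^+ 2 * sqnormc c * b)%:C.
  have := mulcJ_sqnormc c; move: (sqnormc c) => k ek.
  rewrite !(rmorphD, rmorphN, rmorphM, rmorphXn, rmorph1) /= -ek.
  ring.
by rewrite ler0c.
Qed.

Lemma pd_psd n (A : 'M[C]_n) : pd A -> psd A.
Proof.
case=> hA pA; split=> // v; have [->|v0] := eqVneq v 0; first by rewrite qform0.
exact/ltW/pA.
Qed.

Lemma pd_unitmx n (A : 'M[C]_n) : pd A -> A \in unitmx.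
Proof.
case=> _ pA; rewrite unitmxE unitfE; apply/negP => /det0P[v v0 vA].
have cv0 : ctmx v != 0.
  by apply: contra v0 => /eqP cv0; rewrite -[v]ctmxK cv0 ctmx0.
by have := pA _ cv0; rewrite /qform ctmxK vA !mul0mx mxE ltxx.
Qed.

Lemma hermitian_invmx n (A : 'M[C]_n) :
  Defs.hermitian A -> Defs.hermitian (invmx A).
Proof. by rewrite /Defs.hermitian /ctmx map_invmx trmx_inv => ->. Qed.

Lemma qform_invmx n (A : 'M[C]_n) v : Defs.hermitian A -> A \in unitmx ->
  qform (invmx A) (A *m v) = qform A v.
Proof.
by move=> hA uA; rewrite /qform ctmxM hA !mulmxA mulmxKV.
Qed.

Lemma pd_invmx_psd n (A : 'M[C]_n) : pd A -> psd (invmx A).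
Proof.
move=> pA; have [hA _] := pA; have [_ pA'] := pd_psd pA.
split=> [|w]; first exact: hermitian_invmx.
by rewrite -[w](mulKVmx (pd_unitmx pA)) qform_invmx // pd_unitmx.
Qed.

Lemma ellipsoid_coord_bound n (A : 'M[C]_n) (u : 'cV[C]_n) (eps : R) j :
  pd A ->
  qform (invmx A) u <= eps%:C -> sqnormc (u j 0) <= eps * complex.Re (A j j).
Proof.
move=> pA ue; have uA := pd_unitmx pA; have [hA _] := pA.
have := psd_CauchySchwarz u (A *m delta_mx j 0) (pd_invmx_psd pA).
rewrite qform_invmx // qform_delta.
have -> : sform (invmx A) u (A *m delta_mx j 0) = conjc (u j 0).
  rewrite /sform !mulmxA -(mulmxA _ (invmx A)) mulVmx // mulmx1.
  by rewrite -[LHS]/(dotc u (delta_mx j 0)) dotcC dotc_delta.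
rewrite sqnormcJ => /le_trans; apply; rewrite ler_wpM2r ?lec_Re //.
by rewrite -qform_delta Re_ge0 //; case: (pd_psd pA).
Qed.

End PositiveForms.

Section FeasibleVectors.
Variables (R : realType) (n : nat) (Rm : 'M[R[i]]_n) (h0 : 'cV[R[i]]_n).
Variables (Pbar Pt eps : R).

Definition feasible_vec (v : 'cV[R[i]]_n) : Prop :=
  (\sum_j sqnormc (v j 0) <= Pbar) /\
  forall h, qform (invmx Rm) (h - h0) <= eps%:C -> sqnormc (dotc h v) <= Pt.

Lemma feasible_dyad v :
  feasible_vec v -> P1_feasible Rm h0 Pbar Pt eps (dyad v).
Proof.
case=> tr_v hv; split; first exact: psd_dyad.
  by rewrite tr_dyad lecR.
by move=> h /hv; rewrite qform_dyad lecR.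
Qed.

Lemma feasible_vec_attains (hs : 'cV[R[i]]_n) S :
  P1_feasible Rm h0 Pbar Pt eps S -> 0 < complex.Re (qform S hs) ->
  exists2 w, feasible_vec w & sqnormc (dotc hs w) = complex.Re (qform S hs).
Proof.
case=> pS trS hS; set b := complex.Re _ => b0.
set r := (Num.sqrt b)^-1; set w := r%:C *: (S *m hs).
have r2 : r ^+ 2 = b^-1 by rewrite /r exprVn sqr_sqrtr // ltW.
have dotc_w h : dotc h w = r%:C * sform S h hs.
  by rewrite dotcZ /dotc /sform mulmxA.
have w_le h : sqnormc (dotc h w) <= complex.Re (qform S h).
  rewrite dotc_w sqnormcRM r2 ler_pdivrMl // mulrC.
  by apply: le_trans (psd_CauchySchwarz h hs pS) _; rewrite -/b.
exists w; last first.
  rewrite dotc_w sqnormcRM r2 -[sform _ _ _](ge0_ReK (proj2 pS hs)) -/b.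
  by rewrite sqnormcR expr2 mulrA mulVf ?mul1r // gt_eqF.
split.
  apply: le_trans (lec_Re trS).
  rewrite /mxtrace Re_sum; apply: ler_sum => j _.
  by rewrite -dotc_delta -qform_delta w_le.
by move=> h /hS/lec_Re; apply: le_trans.
Qed.

End FeasibleVectors.

Section NonzeroFeasible.
Variables (R : realType) (n : nat) (Rm : 'M[R[i]]_n.+1) (h0 : 'cV[R[i]]_n.+1).
Variables (Pbar Pt eps : R).
Hypotheses (pd_Rm : pd Rm) (Pbar_gt0 : 0 < Pbar) (Pt_gt0 : 0 < Pt).
Hypothesis eps_gt0 : 0 < eps.

Lemma ellipsoid_coord_bounded (j : 'I_n.+1) : exists2 M, 0 <= M &
  forall h, qform (invmx Rm) (h - h0) <= eps%:C -> sqnormc (h j 0) <= M.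
Proof.
have Rjj_ge0 : 0 <= complex.Re (Rm j j).
  by rewrite -qform_delta Re_ge0 //; case: (pd_psd pd_Rm).
exists (2 * sqnormc (h0 j 0) + 2 * (eps * complex.Re (Rm j j))).
  by rewrite addr_ge0 ?mulr_ge0 ?sqnormc_ge0 // ltW.
move=> h h_ell.
have -> : h j 0 = h0 j 0 + (h - h0) j 0 by rewrite !mxE addrCA subrr addr0.
apply: le_trans (sqnormcD_le _ _) _; rewrite lerD2l ler_pM2l //.
exact: ellipsoid_coord_bound.
Qed.

Lemma exists_nonzero_feasible_vec :
  exists2 v, feasible_vec Rm h0 Pbar Pt eps v & v != 0.
Proof.
have [M M0 hM] := ellipsoid_coord_bounded 0.
set d := Num.min 1 (Num.min Pbar (Pt / (M + 1))).
have d_gt0 : 0 < d by rewrite !lt_min ltr01 Pbar_gt0 divr_gt0 // ltr_wpDl.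
have d_le1 : d <= 1 by rewrite ge_min lexx.
have d_lePbar : d <= Pbar by rewrite ge_min [X in _ || X]ge_min lexx orbT.
have dM_lePt : d * (M + 1) <= Pt.
  by rewrite -ler_pdivlMr ?ltr_wpDl // ge_min [X in _ || X]ge_min lexx !orbT.
exists (d%:C *: delta_mx 0 0); last first.
  apply/negP => /eqP/matrixP/(_ 0 0); rewrite !mxE /= mulr1 => /eqP.
  by rewrite eq_complex /= eqxx andbT gt_eqF.
split.
  rewrite big_ord_recl big1 => [|i _]; last by rewrite !mxE /= mulr0 sqnormc0.
  by rewrite !mxE /= mulr1 sqnormcR addr0; nra.
move=> h /hM h_le; rewrite dotcZ sqnormcRM dotcC dotc_delta sqnormcJ.
have := ler_wpM2l (ltW d_gt0) h_le.
have := mulr_ge0 (ltW d_gt0) (sqnormc_ge0 (h 0 0)); nra.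
Qed.

End NonzeroFeasible.

Local Open Scope classical_set_scope.

Section Realification.
Variables (R : realType) (n : nat).
Local Notation T := 'rV[R]_(n + n).

Definition cvec (x : T) : 'cV[R[i]]_n :=
  \col_j (x 0 (lshift n j) +i* x 0 (rshift n j)).

Lemma cvec_surj w : exists x, cvec x = w.
Proof.
exists (row_mx (\row_j complex.Re (w j 0)) (\row_j complex.Im (w j 0))).
apply/matrixP => j k; rewrite mxE row_mxEl row_mxEr !mxE (ord1 k).
by case: (w j 0).
Qed.

Lemma cvec0 : cvec 0 = 0.
Proof. by apply/matrixP => i j; rewrite !mxE. Qed.

Let continuous_add (f g : T -> R) :
  continuous f -> continuous g -> continuous (fun x => f x + g x).
Proof. by move=> hf hg x; exact: (continuousD (hf x) (hg x)). Qed.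

Let continuous_mul (f g : T -> R) :
  continuous f -> continuous g -> continuous (fun x => f x * g x).
Proof. by move=> hf hg x; exact: (continuousM (hf x) (hg x)). Qed.

Lemma continuous_coord_lincomb (a b : 'I_n -> R) (l r : 'I_n -> 'I_(n + n)) :
  continuous (fun x : T => \sum_j (a j * x 0 (l j) + b j * x 0 (r j))).
Proof.
apply: (continuous_big add_continuous) => j _.
by apply: continuous_add; apply: continuous_mul;
  (exact: cst_continuous || exact: coord_continuous).
Qed.

Lemma continuous_sqnormc_dotc_cvec (h : 'cV[R[i]]_n) :
  continuous (fun x => sqnormc (dotc h (cvec x))).
Proof.
pose a j := complex.Re (h j 0); pose b j := complex.Im (h j 0).
have -> : (fun x => sqnormc (dotc h (cvec x))) = fun x : T =>
    (\sum_j (a j * x 0 (lshift n j) + b j * x 0 (rshift n j))) ^+ 2 +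
    (\sum_j (a j * x 0 (rshift n j) + - b j * x 0 (lshift n j))) ^+ 2.
  apply/funext => x; rewrite /sqnormc /dotc mxE sum_complex /=.
  congr (_ ^+ 2 + _ ^+ 2); apply: eq_bigr => j _;
    rewrite ctmxE !mxE /a /b; case: (h j 0) => ? ? /=; simpc; rewrite /=; ring.
by apply: continuous_add; apply: continuous_mul;
  exact: continuous_coord_lincomb.
Qed.

Lemma sum_sqnormc_cvec (x : T) :
  \sum_j sqnormc (cvec x j 0) = \sum_(k < n + n) x 0 k ^+ 2.
Proof.
by rewrite big_split_ord /= -big_split; apply: eq_bigr => j _; rewrite mxE.
Qed.

Lemma continuous_sum_sqr :
  continuous (fun x : T => \sum_(k < n + n) x 0 k ^+ 2).
Proof.
apply: (continuous_big add_continuous) => k _.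
by apply: continuous_mul; exact: coord_continuous.
Qed.

End Realification.

Section FeasibleSet.
Variables (R : realType) (n : nat) (Rm : 'M[R[i]]_n) (h0 : 'cV[R[i]]_n).
Variables (Pbar Pt eps : R).
Local Notation T := 'rV[R]_(n + n).

Definition feasible_set : set T :=
  [set x | feasible_vec Rm h0 Pbar Pt eps (cvec x)].

Lemma closed_feasible_set : closed feasible_set.
Proof.
have -> : feasible_set =
    (fun x : T => \sum_(k < n + n) x 0 k ^+ 2) @^-1` [set y | y <= Pbar] `&`
    \bigcap_(h in [set h | qform (invmx Rm) (h - h0) <= eps%:C])
      (fun x => sqnormc (dotc h (cvec x))) @^-1` [set y | y <= Pt].
  by apply/seteqP; split => x [tr_x hx]; split;
    rewrite //= ?sum_sqnormc_cvec // -sum_sqnormc_cvec.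
apply: closedI; last apply: closed_bigI => h _;
  (apply: preimage_closed; last exact: closed_le) => x _.
- exact: continuous_sum_sqr.
- exact: continuous_sqnormc_dotc_cvec.
Qed.

Lemma compact_feasible_set : compact feasible_set.
Proof.
have := @rV_compact R (n + n) (fun=> `[-(Pbar + 1), Pbar + 1])
  (fun=> @segment_compact R _ _).
move/(subclosed_compact closed_feasible_set); apply.
move=> x [/= + _] k; rewrite sum_sqnormc_cvec in_itv /= (bigD1 k) //= => tr_x.
have : x 0 k ^+ 2 <= Pbar.
  by apply: le_trans tr_x; rewrite lerDl sumr_ge0 // => i _; exact: sqr_ge0.
by move=> ?; apply/andP; split; nra.
Qed.

End FeasibleSet.

Lemma exists_optimal_feasible_vec (R : realType) (n : nat) (Rm : 'M[R[i]]_n.+1)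
    (hs h0 : 'cV[R[i]]_n.+1) (Pbar Pt eps : R) :
  pd Rm -> 0 < Pbar -> 0 < Pt -> 0 < eps ->
  exists u, [/\ feasible_vec Rm h0 Pbar Pt eps u, u != 0 &
    forall w, feasible_vec Rm h0 Pbar Pt eps w ->
      sqnormc (dotc hs w) <= sqnormc (dotc hs u)].
Proof.
move=> pd_Rm Pbar_gt0 Pt_gt0 eps_gt0.
have feasible0 : feasible_set Rm h0 Pbar Pt eps !=set0.
  exists 0; rewrite /feasible_set /= cvec0; split.
    by rewrite big1 ?ltW // => j _; rewrite mxE sqnormc0.
  by move=> h _; rewrite dotc0 sqnormc0 ltW.
have [c /[!inE] c_feas c_max] := EVT_max_rV feasible0
  (@compact_feasible_set R n.+1 Rm h0 Pbar Pt eps)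
  (continuous_subspaceT (@continuous_sqnormc_dotc_cvec R n.+1 hs)).
have {}c_max w : feasible_vec Rm h0 Pbar Pt eps w ->
    sqnormc (dotc hs w) <= sqnormc (dotc hs (cvec c)).
  by have [x <-] := cvec_surj w => x_feas; apply: c_max; rewrite inE.
have [c0|c_neq0] := eqVneq (cvec c) 0; last by exists (cvec c).
have [v v_feas v_neq0] :=
  exists_nonzero_feasible_vec h0 pd_Rm Pbar_gt0 Pt_gt0 eps_gt0.
exists v; split => // w /c_max; rewrite c0 dotc0 sqnormc0 => /le_trans; apply.
exact: sqnormc_ge0.
Qed.

Local Close Scope classical_set_scope.
Local Close Scope complex_scope.

Theorem lemma1 (R : realType) (n : nat) (Rm : 'M[R[i]]_n.+1)
    (hs h0 : 'cV[R[i]]_n.+1) (Pbar Pt eps : R) :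
  pd Rm -> 0 < Pbar -> 0 < Pt -> 0 < eps ->
  exists S : 'M[R[i]]_n.+1,
    P1_optimal Rm hs h0 Pbar Pt eps S /\ \rank S = 1%N.
Proof.
move=> pd_Rm Pbar_gt0 Pt_gt0 eps_gt0.
have [u [u_feas u_neq0 u_max]] :=
  exists_optimal_feasible_vec hs h0 pd_Rm Pbar_gt0 Pt_gt0 eps_gt0.
exists (dyad u); split; last exact: rank_dyad.
split; first exact: feasible_dyad.
move=> S S_feas; rewrite /P1_obj qform_dyad /=.
have [[_ S_psd] _ _] := S_feas.
have b_ge0 := Re_ge0 (S_psd hs).
have b_le : complex.Re (qform S hs) <= sqnormc (dotc hs u).
  have [->|b_neq0] := eqVneq (complex.Re (qform S hs)) 0.
    exact: sqnormc_ge0.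
  have b_gt0 : 0 < complex.Re (qform S hs) by rewrite lt_def b_neq0.
  by have [w w_feas <-] := feasible_vec_attains S_feas b_gt0; exact: u_max.
by rewrite ler_ln ?posrE ?lerD2l // ltr_wpDr ?sqnormc_ge0.
Qed.
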